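(* For every $a\in S_A$ and every $b\in S_B$, the vertices $a$ and $b$ are adjacent in $\Gamma$.
   Context: All graphs are finite and simple. A graph $G$ is a minimal prime graph complement if $G$ has at least $2$ vertices and: (1) the complement $\overline{G}$ is connected; (2) $G$ is triangle-free; (3) $G$ is $3$-colorable; (4) for any two distinct nonadjacent vertices $u,v$ of $G$, adding the edge $uv$ to $G$ yields a graph that either contains a triangle or is not $3$-colorable. Standing setup: $\Gamma$ is a minimal prime graph complement with a vertex $X$ of degree $2$, whose two neighbors are $A$ and $B$. Among the vertices of $\Gamma$ other than $X,A,B$: $S_A$ is the set of those adjacent to $A$ but not $B$; $S_B$ the set of those adjacent to $B$ but not $A$; $S_Y$ the set of those adjacent to both $A$ and $B$; $S_Z$ the set of those adjacent to neither $A$ nor $B$. *)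

From mathcomp Require Import all_boot.
Set Implicit Arguments. Unset Strict Implicit. Unset Printing Implicit Defensive.

Definition simple_graph (T : finType) (e : rel T) : Prop :=
  symmetric e /\ irreflexive e.

Definition compl_rel (T : finType) (e : rel T) : rel T :=
  fun x y => (x != y) && ~~ e x y.

Definition connected_graph (T : finType) (e : rel T) : Prop :=
  forall x y : T, connect e x y.

Definition triangle_free (T : finType) (e : rel T) : Prop :=
  forall x y z : T, ~ [/\ e x y, e y z & e x z].

Definition three_colorable (T : finType) (e : rel T) : Prop :=
  exists f : T -> 'I_3, forall x y, e x y -> f x != f y.

Definition add_edge (T : finType) (e : rel T) (u v : T) : rel T :=
  fun x y => [|| e x y, (x == u) && (y == v) | (x == v) && (y == u)].

Definition minimal_prime_graph_complement (T : finType) (e : rel T) : Prop :=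
  [/\ 1 < #|T|,
      connected_graph (compl_rel e),
      triangle_free e,
      three_colorable e &
      forall u v : T, u != v -> ~~ e u v ->
        ~ triangle_free (add_edge e u v) \/ ~ three_colorable (add_edge e u v)].

Definition nbhd (T : finType) (e : rel T) (x : T) : {set T} := [set y | e x y].

Definition S_only (T : finType) (e : rel T) (X A B : T) : {set T} :=
  [set v | [&& v \notin [:: X; A; B], e v A & ~~ e v B]].

From mathcomp Require Import all_boot.

(* Every vertex other than A and B is adjacent to A or B: such a vertex w could
   be joined to X without creating a triangle, so by minimality every proper
   3-colouring gives w the colour of X; two such vertices are then never
   adjacent, which makes "2 on N(A), 1 on N(B) \ N(A), 0 elsewhere" a proper
   colouring, in which w would get colour 0 while X gets colour 2.  If now
   a in S_A and b in S_B were not adjacent, this colouring separates them, so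
   by minimality they have a common neighbour; that neighbour is adjacent to
   neither A nor B by triangle-freeness, a contradiction. *)

Set Implicit Arguments.
Unset Strict Implicit.
Unset Printing Implicit Defensive.

Definition proper_coloring (T : finType) (e : rel T) (f : T -> 'I_3) : Prop :=
  forall x y, e x y -> f x != f y.

Section AddEdge.
Variables (T : finType) (e : rel T) (u v : T).

Lemma add_edge_sym : symmetric e -> symmetric (add_edge e u v).
Proof.
move=> se x y; rewrite /add_edge se.
by case: (x == u); case: (x == v); case: (y == u); case: (y == v); rewrite ?orbF ?orbT.
Qed.

Lemma add_edge_irr : irreflexive e -> u != v -> irreflexive (add_edge e u v).
Proof.
move=> ie uv x; rewrite /add_edge ie /=.
by apply: contraNF uv => /orP[] /andP[/eqP <- /eqP <-].
Qed.

Lemma add_edge_notin x z : z != u -> z != v -> add_edge e u v x z = e x z.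
Proof. by move=> zu zv; rewrite /add_edge (negbTE zu) (negbTE zv) !andbF !orbF. Qed.

Lemma triangle_free_add_edge :
  symmetric e -> irreflexive e -> triangle_free e -> u != v ->
  (forall w, ~~ (e u w && e w v)) -> triangle_free (add_edge e u v).
Proof.
move=> se ie tf uv no_common x y z.
have symE := add_edge_sym se.
wlog new_xy : x y z / ~~ e x y.
  move=> gen [exy eyz exz].
  have [oxy|nxy] := boolP (e x y); first last.
    by apply: (gen x y z nxy).
  have [oyz|nyz] := boolP (e y z); first last.
    by apply: (gen y z x nyz); split; rewrite // symE.
  have [oxz|nxz] := boolP (e x z); first last.
    by apply: (gen x z y nxz); split; rewrite // symE.
  exact: (tf x y z).
move=> [exy eyz exz].
have zx : z != x by apply: contraTneq exz => ->; rewrite add_edge_irr.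
have zy : z != y by apply: contraTneq eyz => ->; rewrite add_edge_irr.
move: exy; rewrite /add_edge (negbTE new_xy) /=.
case/orP => /andP[/eqP xE /eqP yE]; subst x y;
  rewrite !add_edge_notin // in eyz exz;
  by have := no_common z; rewrite [e z v]se ?eyz ?exz.
Qed.

Lemma three_colorable_add_edge (f : T -> 'I_3) :
  proper_coloring e f -> f u != f v -> three_colorable (add_edge e u v).
Proof.
move=> fP fuv; exists f => x y.
by case/orP=> [/fP //|/orP[]/andP[/eqP-> /eqP->]] //; rewrite eq_sym.
Qed.

End AddEdge.

Definition nbhd_coloring (T : finType) (e : rel T) (A B : T) (v : T) : 'I_3 :=
  if e v A then @Ordinal 3 2 isT
  else if e v B then @Ordinal 3 1 isT
  else @Ordinal 3 0 isT.

Lemma nbhd_coloring_proper (T : finType) (e : rel T) (A B : T) :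
  triangle_free e ->
  (forall x y, e x y -> ~~ e x A -> ~~ e x B -> e y A || e y B) ->
  proper_coloring e (nbhd_coloring e A B).
Proof.
move=> tf far_indep x y exy; rewrite /nbhd_coloring.
have [xA|nxA] := boolP (e x A); have [yA|nyA] := boolP (e y A).
- by exfalso; apply: (tf x y A).
- by case: (e y B).
- by case: (e x B).
have [xB|nxB] := boolP (e x B); have [yB|nyB] := boolP (e y B) => //.
- by exfalso; apply: (tf x y B).
- by have := far_indep x y exy nxA nxB; rewrite (negbTE nyA) (negbTE nyB).
Qed.

Section MinimalGraph.
Variables (T : finType) (e : rel T).
Hypotheses (se : symmetric e) (ie : irreflexive e) (tf : triangle_free e).
Hypothesis colorable : three_colorable e.
Hypothesis minimal : forall u v : T, u != v -> ~~ e u v ->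
  ~ triangle_free (add_edge e u v) \/ ~ three_colorable (add_edge e u v).

Lemma common_nbr_of_proper_coloring (f : T -> 'I_3) u v :
  proper_coloring e f -> u != v -> ~~ e u v -> f u != f v ->
  exists2 w, e u w & e w v.
Proof.
move=> fP uv nuv fuv.
case: (pickP (fun w => e u w && e w v)) => [w /andP[]|none]; first by exists w.
have no_common w : ~~ (e u w && e w v) by rewrite none.
exfalso; case: (minimal uv nuv); apply.
  exact: triangle_free_add_edge.
exact: three_colorable_add_edge fP fuv.
Qed.

Variables (X A B : T).
Hypothesis nbhdX : nbhd e X = [set A; B].

Lemma adjX y : e X y = (y == A) || (y == B).
Proof. by move/setP/(_ y): nbhdX; rewrite !inE. Qed.

Lemma far_color_eq_X (f : T -> 'I_3) w : proper_coloring e f ->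
  w != A -> w != B -> ~~ e w A -> ~~ e w B -> f w = f X.
Proof.
move=> fP wA wB nwA nwB; apply/eqP; apply: contraT => fwX.
have Xw : X != w by apply: contraNneq nwA => <-; rewrite adjX eqxx.
have nXw : ~~ e X w by rewrite adjX negb_or wA wB.
have fXw : f X != f w by rewrite eq_sym.
have [c eXc ecw] := common_nbr_of_proper_coloring fP Xw nXw fXw.
by move: eXc; rewrite adjX => /orP[] /eqP cE; [move: nwA|move: nwB]; rewrite se -cE ecw.
Qed.

Lemma far_adjacent_independent x y :
  e x y -> ~~ e x A -> ~~ e x B -> e y A || e y B.
Proof.
move=> exy nxA nxB; apply: contraT; rewrite negb_or => /andP[nyA nyB].
have [f fP] := colorable.
have xA : x != A by apply: contraNneq nyA => <-; rewrite se.
have xB : x != B by apply: contraNneq nyB => <-; rewrite se.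
have yA : y != A by apply: contraNneq nxA => <-.
have yB : y != B by apply: contraNneq nxB => <-.
have := fP x y exy.
by rewrite (far_color_eq_X fP xA xB nxA nxB) (far_color_eq_X fP yA yB nyA nyB) eqxx.
Qed.

Lemma no_far_vertex w : w != A -> w != B -> e w A || e w B.
Proof.
move=> wA wB; apply: contraT; rewrite negb_or => /andP[nwA nwB].
have gP := nbhd_coloring_proper tf far_adjacent_independent.
have := far_color_eq_X gP wA wB nwA nwB.
by rewrite /nbhd_coloring (negbTE nwA) (negbTE nwB) adjX eqxx.
Qed.

End MinimalGraph.

Theorem lemma11 (T : finType) (e : rel T) (X A B : T) :
  simple_graph e ->
  minimal_prime_graph_complement e ->
  A != B ->
  nbhd e X = [set A; B] ->
  forall a b : T, a \in S_only e X A B -> b \in S_only e X B A -> e a b.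
Proof.
move=> [se ie] [_ _ tf colorable minimal] _ nbhdX a b.
rewrite !inE => /and3P[_ eaA naB] /and3P[_ ebB nbA].
apply: contraT => nab.
have ab : a != b by apply: contraNneq nbA => <-.
have gP := nbhd_coloring_proper tf
  (far_adjacent_independent se ie tf colorable minimal nbhdX).
have gab : nbhd_coloring e A B a != nbhd_coloring e A B b.
  by rewrite /nbhd_coloring eaA (negbTE nbA) ebB.
have [c eac ecb] := common_nbr_of_proper_coloring se ie tf minimal gP ab nab gab.
have ncA : ~~ e c A by apply/negP => ecA; apply: (tf a c A).
have ncB : ~~ e c B by apply/negP => ecB; apply: (tf b c B); rewrite se.
have cA : c != A by apply: contraNneq nbA => <-; rewrite se.
have cB : c != B by apply: contraNneq naB => <-.
have := no_far_vertex se ie tf colorable minimal nbhdX cA cB.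
by rewrite (negbTE ncA) (negbTE ncB).
Qed.
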